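(* Let $G$ be a (not necessarily connected) graph on $n\ge1$ vertices with adjacency matrix $A$, let $m\ge1$, and let $\alpha\in\mathbb{R}\setminus(\mathrm{ev}(A)\cup\{0,-m,-2m\})$. Then there exist $\mu\in\mathbb{R}$, $f\in\mathbb{R}^m$, $g\in\mathbb{R}^n$ with \[ (J_m+\alpha I)f=\tfrac{\mu}{2}\mathbf 1,\quad (A-J_n-\alpha I)g=-\tfrac{\mu}{2}\mathbf 1,\quad \langle f,f\rangle+\langle g,g\rangle=1,\quad \langle\mathbf 1,f\rangle+\langle\mathbf 1,g\rangle=0 \] if and only if \[ (\alpha+2m)\langle\mathbf 1,(A-\alpha I)^{-1}\mathbf 1\rangle-m=0. \]
   Context: $\mathrm{ev}(A)$ is the set of eigenvalues of $A$; $J_k$ the $k\times k$ all-ones matrix; $\mathbf 1$ the all-ones vector of the appropriate size; $I$ the identity. *)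

From HB Require Import structures.
From mathcomp Require Import all_boot all_order all_algebra.
Set Implicit Arguments. Unset Strict Implicit. Unset Printing Implicit Defensive.
Import Order.TTheory GRing.Theory Num.Theory.
Local Open Scope ring_scope.

Definition adjmx (R : nzRingType) (n : nat) (e : rel 'I_n) : 'M[R]_n :=
  \matrix_(i, j) (e i j)%:R.

Definition Jmx (R : nzRingType) (k : nat) : 'M[R]_k := const_mx 1.
Definition ones (R : nzRingType) (k : nat) : 'cV[R]_k := const_mx 1.

Definition dotv (R : nzRingType) (k : nat) (u v : 'cV[R]_k) : R :=
  \sum_(i < k) u i 0 * v i 0.

(* Write c = mu/2.  Since J_k v = <1,v> 1, the first equation forces
   f = c/(alpha+m) 1, and the second reads (A - alpha I) g = (<1,g> - c) 1,
   so g is a multiple of (A - alpha I)^-1 1.  Once <1,f> + <1,g> = 0 fixes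
   that multiple, f and g are c times fixed vectors and the only remaining
   constraint is c ((alpha + 2m) <1,(A - alpha I)^-1 1> - m) = 0.  The
   normalisation <f,f> + <g,g> = 1 rules out c = 0, and any c <> 0 can be
   rescaled to meet it. *)

From HB Require Import structures.
From mathcomp Require Import all_boot all_order all_algebra.
From mathcomp Require Import ring.
Set Implicit Arguments.
Unset Strict Implicit.
Unset Printing Implicit Defensive.
Import Order.TTheory GRing.Theory Num.Theory.
Local Open Scope ring_scope.

Lemma mulJmx (R : nzRingType) k (v : 'cV[R]_k) :
  Jmx R k *m v = dotv (ones R k) v *: ones R k.
Proof.
apply/matrixP => i j; rewrite (ord1 j) !mxE /dotv mulr1.
by apply: eq_bigr => l _; rewrite !mxE.
Qed.

Lemma dotv_ones (R : nzRingType) k : dotv (ones R k) (ones R k) = k%:R.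
Proof.
rewrite /dotv (eq_bigr (fun _ => 1)) ?sumr_const ?card_ord //.
by move=> i _; rewrite !mxE mulr1.
Qed.

Lemma dotvZr (R : comNzRingType) k (u v : 'cV[R]_k) a :
  dotv u (a *: v) = a * dotv u v.
Proof. by rewrite /dotv mulr_sumr; apply: eq_bigr => i _; rewrite mxE mulrCA. Qed.

Lemma dotvZZ (R : comNzRingType) k (u : 'cV[R]_k) a :
  dotv (a *: u) (a *: u) = a ^+ 2 * dotv u u.
Proof. by rewrite /dotv mulr_sumr; apply: eq_bigr => i _; rewrite !mxE; ring. Qed.

Lemma dotv_ge0 (R : realDomainType) k (u : 'cV[R]_k) : 0 <= dotv u u.
Proof. by apply: sumr_ge0 => i _; rewrite -expr2 sqr_ge0. Qed.

Lemma unitmx_sub_noneigenvalue (F : fieldType) k (A : 'M[F]_k) a :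
  ~~ eigenvalue A a -> A - a%:M \in unitmx.
Proof. by rewrite /eigenvalue /eigenspace kermx_eq0 row_free_unit negbK. Qed.

Lemma Jmx_shift_solve (F : fieldType) k (a c : F) (f : 'cV[F]_k) :
  a != 0 -> a + k%:R != 0 ->
  (Jmx F k + a%:M) *m f = c *: ones F k <-> f = (c / (a + k%:R)) *: ones F k.
Proof.
move=> a_neq0 ak_neq0; rewrite mulmxDl mulJmx mul_scalar_mx.
split=> [eq_f | ->]; last first.
  by rewrite dotvZr dotv_ones !scalerA -scalerDl; congr (_ *: _); field.
set sf := dotv _ f in eq_f.
have {}eq_f : f = ((c - sf) / a) *: ones F k.
  by rewrite mulrC -scalerA scalerBl -eq_f addrC addKr scalerA mulVf ?scale1r.
have := congr1 (dotv (ones F k)) eq_f; rewrite dotvZr dotv_ones -/sf => eq_sf.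
have {}eq_sf : sf = c * k%:R / (a + k%:R).
  by apply: (canRL (mulfK ak_neq0)); rewrite mulrDr {1}eq_sf; field.
by rewrite eq_f eq_sf; congr (_ *: _); field; rewrite ak_neq0.
Qed.

Lemma unitmx_sub_Jmx_solve (F : fieldType) k (B : 'M[F]_k) (c : F) g :
  B \in unitmx ->
  (B - Jmx F k) *m g = - c *: ones F k <->
  g = (dotv (ones F k) g - c) *: (invmx B *m ones F k).
Proof.
move=> B_unit; rewrite mulmxBl mulJmx; split=> [eq_g | eq_g].
  move/eqP: eq_g; rewrite subr_eq => /eqP eq_g.
  by rewrite -[LHS](mulKmx B_unit) eq_g scaleNr addrC -scalerBl scalemxAr.
by rewrite {1}eq_g -scalemxAr mulKVmx // scalerBl addrAC subrr add0r scaleNr.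
Qed.

Section ShiftedSystem.
Variables (F : fieldType) (m n : nat) (A : 'M[F]_n) (alpha : F).

Definition solf : 'cV[F]_m := (alpha + m%:R)^-1 *: ones F m.

Definition solg : 'cV[F]_n :=
  - ((alpha + 2 * m%:R) / (alpha + m%:R)) *: (invmx (A - alpha%:M) *m ones F n).

Hypotheses (alpha_neq0 : alpha != 0) (alpham_neq0 : alpha + m%:R != 0)
  (A_shift_unit : A - alpha%:M \in unitmx).

Lemma shifted_system_solutions (c : F) f g :
  [/\ (Jmx F m + alpha%:M) *m f = c *: ones F m,
      (A - Jmx F n - alpha%:M) *m g = - c *: ones F n
    & dotv (ones F m) f + dotv (ones F n) g = 0]
  <->
  [/\ f = c *: solf, g = c *: solg
    & c * ((alpha + 2 * m%:R) * dotv (ones F n) (invmx (A - alpha%:M) *m ones F n)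
           - m%:R) = 0].
Proof.
set s := dotv (ones F n) (invmx _ *m _).
have sum_solf : dotv (ones F m) solf = m%:R / (alpha + m%:R).
  by rewrite dotvZr dotv_ones mulrC.
have sum_csolg : (dotv (ones F n) (c *: solg) == - (c * (m%:R / (alpha + m%:R))))
    = (c * ((alpha + 2 * m%:R) * s - m%:R) == 0).
  rewrite !dotvZr -/s -subr_eq0 opprK.
  have -> : c * (- ((alpha + 2 * m%:R) / (alpha + m%:R)) * s) + c * (m%:R / (alpha + m%:R))
      = - (c * ((alpha + 2 * m%:R) * s - m%:R)) / (alpha + m%:R) by field.
  by rewrite mulf_eq0 invr_eq0 (negPf alpham_neq0) orbF oppr_eq0.
have cf_solf : (c / (alpha + m%:R)) *: ones F m = c *: solf by rewrite scalerA.
rewrite (addrAC A); split=> [[eq_f eq_g sum0] | [-> -> /eqP]].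
  move/(Jmx_shift_solve _ _ alpha_neq0 alpham_neq0): eq_f; rewrite cf_solf => f_val.
  rewrite f_val in sum0 *.
  move/(unitmx_sub_Jmx_solve _ _ A_shift_unit): eq_g; set sg := dotv _ g => eq_g.
  move/eqP: sum0; rewrite dotvZr sum_solf addrC addr_eq0 -/sg => /eqP sg_val.
  have g_val : g = c *: solg.
    by rewrite eq_g sg_val /solg scalerA; congr (_ *: _); field.
  by split=> //; apply/eqP; rewrite -sum_csolg -g_val -/sg sg_val.
rewrite -sum_csolg => /eqP sum_cg; split.
- by apply/(Jmx_shift_solve _ _ alpha_neq0 alpham_neq0).
- apply/(unitmx_sub_Jmx_solve _ _ A_shift_unit).
  by rewrite sum_cg /solg scalerA; congr (_ *: _); field.
- by rewrite dotvZr sum_solf sum_cg addrN.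
Qed.

End ShiftedSystem.

Lemma solf_solg_norm_gt0 (R : realFieldType) m n (A : 'M[R]_n) (alpha : R) :
  (0 < m)%N -> alpha + m%:R != 0 ->
  0 < dotv (solf m alpha) (solf m alpha) + dotv (solg m A alpha) (solg m A alpha).
Proof.
move=> m_gt0 alpham_neq0; apply: ltr_wpDr; first exact: dotv_ge0.
by rewrite dotvZZ dotv_ones mulr_gt0 ?ltr0n // exprn_even_gt0 // invr_eq0.
Qed.

Theorem lemma3p4 (R : rcfType) (n m : nat) (e : rel 'I_n)
  (e_sym : symmetric e) (e_irr : irreflexive e)
  (hn : (1 <= n)%N) (hm : (1 <= m)%N) (alpha : R)
  (h_ev : ~~ eigenvalue (adjmx R e) alpha)
  (h0 : alpha != 0) (hm1 : alpha != - m%:R) (hm2 : alpha != - (2 * m)%:R) :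
  (exists (mu : R) (f : 'cV[R]_m) (g : 'cV[R]_n),
      [/\ (Jmx R m + alpha%:M) *m f = (mu / 2) *: ones R m,
          (adjmx R e - Jmx R n - alpha%:M) *m g = - (mu / 2) *: ones R n,
          dotv f f + dotv g g = 1
        & dotv (ones R m) f + dotv (ones R n) g = 0])
  <->
  (alpha + 2 * m%:R) * dotv (ones R n) (invmx (adjmx R e - alpha%:M) *m ones R n)
    - m%:R = 0.
Proof.
have A_shift_unit := unitmx_sub_noneigenvalue h_ev.
have alpham_neq0 : alpha + m%:R != 0 by rewrite addr_eq0.
have := solf_solg_norm_gt0 (adjmx R e) hm alpham_neq0.
set N := dotv (solf m alpha) _ + _ => N_gt0.
have normZ c : dotv (c *: solf m alpha) (c *: solf m alpha)
    + dotv (c *: solg m (adjmx R e) alpha) (c *: solg m (adjmx R e) alpha) = c ^+ 2 * N.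
  by rewrite /N mulrDr -!dotvZZ.
split=> [[mu [f [g [eq_f eq_g norm1 sum0]]]] | hs].
  have [f_val g_val /eqP] := (shifted_system_solutions h0 alpham_neq0 A_shift_unit _ _ _).1
    (And3 eq_f eq_g sum0).
  rewrite mulf_eq0 => /orP[/eqP mu0 | /eqP //].
  by move: norm1; rewrite f_val g_val normZ mu0 expr0n mul0r => /eqP; rewrite eq_sym oner_eq0.
set c := (Num.sqrt N)^-1.
have [|eq_f eq_g sum0] := (shifted_system_solutions h0 alpham_neq0 A_shift_unit c
  (c *: solf m alpha) (c *: solg m (adjmx R e) alpha)).2.
  by split; rewrite // hs mulr0.
have half_2c : 2 * c / 2 = c by rewrite mulrAC divff ?mul1r ?pnatr_eq0.
exists (2 * c), (c *: solf m alpha), (c *: solg m (adjmx R e) alpha).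
rewrite half_2c normZ exprVn sqr_sqrtr ?ltW // mulVf ?gt_eqF //.
Qed.
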